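(* Let $c$ be a statement, $lc$ a location and $b$ a Boolean. If $lc \in \mathit{all\_locations}\ c\ \mathit{PTop}$, then every location occurring as the first component of an element of $\mathit{synt\_step\_image}\ (lc,b)$ belongs to $\mathit{all\_locations}\ c\ \mathit{PTop}$.
   Context: Syntax. Values: $\mathit{val} ::= \mathit{Bool}\ b \mid \mathit{Null}$. Expressions: $\mathit{expr} ::= \mathit{Val}\ v \mid \mathit{Var}\ x$. Statements: $\mathit{stmt} ::= \mathit{Empty} \mid \mathit{Assign}\ x\ v \mid \mathit{Seq}\ c_1\ c_2 \mid \mathit{Cond}\ e\ c_1\ c_2 \mid \mathit{While}\ e\ c$. Statement paths: $\mathit{stmt\_path} ::= \mathit{PTop} \mid \mathit{PSeqLeft}\ sp\ c_2 \mid \mathit{PSeqRight}\ c_1\ sp \mid \mathit{PCondLeft}\ e\ sp\ c_2 \mid \mathit{PCondRight}\ e\ c_1\ sp \mid \mathit{PWhile}\ e\ sp$. A location is $\mathit{Loc}\ c\ sp$. A syntactic configuration is a pair (location, Boolean). $\mathit{all\_locations}\ c\ sp$ is the list of all locations of subtrees of $c$ in context $sp$: it contains $\mathit{Loc}\ c\ sp$, and additionally for $c=\mathit{Seq}\ c_1\ c_2$ the elements of $\mathit{all\_locations}\ c_1\ (\mathit{PSeqLeft}\ sp\ c_2)$ and $\mathit{all\_locations}\ c_2\ (\mathit{PSeqRight}\ c_1\ sp)$; for $c=\mathit{Cond}\ e\ c_1\ c_2$ those of $\mathit{all\_locations}\ c_1\ (\mathit{PCondLeft}\ e\ sp\ c_2)$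 and $\mathit{all\_locations}\ c_2\ (\mathit{PCondRight}\ e\ c_1\ sp)$; for $c=\mathit{While}\ e\ c'$ those of $\mathit{all\_locations}\ c'\ (\mathit{PWhile}\ e\ sp)$; and nothing else. Next location: $\mathit{next\_loc}\ c\ \mathit{PTop} = (\mathit{Loc}\ c\ \mathit{PTop}, \mathit{False})$; $\mathit{next\_loc}\ c\ (\mathit{PSeqLeft}\ sp\ c_2) = (\mathit{Loc}\ c_2\ (\mathit{PSeqRight}\ c\ sp), \mathit{True})$; $\mathit{next\_loc}\ c\ (\mathit{PSeqRight}\ c_1\ sp) = (\mathit{Loc}\ (\mathit{Seq}\ c_1\ c)\ sp, \mathit{False})$; $\mathit{next\_loc}\ c\ (\mathit{PCondLeft}\ e\ sp\ c_2) = (\mathit{Loc}\ (\mathit{Cond}\ e\ c\ c_2)\ sp, \mathit{False})$; $\mathit{next\_loc}\ c\ (\mathit{PCondRight}\ e\ c_1\ sp) = (\mathit{Loc}\ (\mathit{Cond}\ e\ c_1\ c)\ sp, \mathit{False})$; $\mathit{next\_loc}\ c\ (\mathit{PWhile}\ e\ sp) = (\mathit{Loc}\ (\mathit{While}\ e\ c)\ sp, \mathit{True})$. $\mathit{synt\_step\_image}$: $(\mathit{Loc}\ \mathit{Empty}\ sp,\mathit{True})\mapsto[(\mathit{Loc}\ \mathit{Empty}\ sp,\mathit{False})]$; $(\mathit{Loc}\ (\mathit{Assign}\ x\ v)\ sp,\mathit{True})\mapsto[(\mathit{Loc}\ (\mathit{Assign}\ x\ v)\ sp,\mathit{False})]$;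 $(\mathit{Loc}\ (\mathit{Seq}\ c_1\ c_2)\ sp,\mathit{True})\mapsto[(\mathit{Loc}\ c_1\ (\mathit{PSeqLeft}\ sp\ c_2),\mathit{True})]$; $(\mathit{Loc}\ (\mathit{Cond}\ e\ c_1\ c_2)\ sp,\mathit{True})\mapsto[(\mathit{Loc}\ c_1\ (\mathit{PCondLeft}\ e\ sp\ c_2),\mathit{True}),(\mathit{Loc}\ c_2\ (\mathit{PCondRight}\ e\ c_1\ sp),\mathit{True})]$; $(\mathit{Loc}\ (\mathit{While}\ e\ c)\ sp,\mathit{True})\mapsto[(\mathit{Loc}\ c\ (\mathit{PWhile}\ e\ sp),\mathit{True}),(\mathit{Loc}\ (\mathit{While}\ e\ c)\ sp,\mathit{False})]$; $(\mathit{Loc}\ c\ sp,\mathit{False})\mapsto[\,]$ if $sp=\mathit{PTop}$, else $[\mathit{next\_loc}\ c\ sp]$. *)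

From Stdlib Require Import List Bool.
Import ListNotations.

Definition var := nat.

Inductive val : Type := Bool (b : bool) | Null.

Inductive expr : Type := Val (v : val) | Var (x : var).

Inductive stmt : Type :=
| Empty
| Assign (x : var) (v : val)
| Seq (c1 c2 : stmt)
| Cond (e : expr) (c1 c2 : stmt)
| While (e : expr) (c : stmt).

Inductive stmt_path : Type :=
| PTop
| PSeqLeft (sp : stmt_path) (c2 : stmt)
| PSeqRight (c1 : stmt) (sp : stmt_path)
| PCondLeft (e : expr) (sp : stmt_path) (c2 : stmt)
| PCondRight (e : expr) (c1 : stmt) (sp : stmt_path)
| PWhile (e : expr) (sp : stmt_path).

Inductive location : Type := Loc (c : stmt) (sp : stmt_path).

Definition synt_config : Type := (location * bool)%type.

Fixpoint all_locations (c : stmt) (sp : stmt_path) : list location :=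
  Loc c sp ::
  match c with
  | Seq c1 c2 => all_locations c1 (PSeqLeft sp c2) ++ all_locations c2 (PSeqRight c1 sp)
  | Cond e c1 c2 => all_locations c1 (PCondLeft e sp c2) ++ all_locations c2 (PCondRight e c1 sp)
  | While e c' => all_locations c' (PWhile e sp)
  | _ => []
  end.

Definition next_loc (c : stmt) (sp : stmt_path) : synt_config :=
  match sp with
  | PTop => (Loc c PTop, false)
  | PSeqLeft sp c2 => (Loc c2 (PSeqRight c sp), true)
  | PSeqRight c1 sp => (Loc (Seq c1 c) sp, false)
  | PCondLeft e sp c2 => (Loc (Cond e c c2) sp, false)
  | PCondRight e c1 sp => (Loc (Cond e c1 c) sp, false)
  | PWhile e sp => (Loc (While e c) sp, true)
  end.

Definition synt_step_image (cfg : synt_config) : list synt_config :=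
  match cfg with
  | (Loc c sp, true) =>
      match c with
      | Empty => [(Loc Empty sp, false)]
      | Assign x v => [(Loc (Assign x v) sp, false)]
      | Seq c1 c2 => [(Loc c1 (PSeqLeft sp c2), true)]
      | Cond e c1 c2 => [(Loc c1 (PCondLeft e sp c2), true); (Loc c2 (PCondRight e c1 sp), true)]
      | While e c' => [(Loc c' (PWhile e sp), true); (Loc (While e c') sp, false)]
      end
  | (Loc c sp, false) =>
      match sp with
      | PTop => []
      | _ => [next_loc c sp]
      end
  end.

(* A successor of a location inside the subtree at [Loc c sp] either stays in
   that subtree or leaves it through the exit location [fst (next_loc c sp)].
   This is proved by induction on [c]: the exit of each immediate subtree is a
   location of the enclosing subtree, and at the top level the exit
   [Loc c PTop] is the root itself. *)

From Stdlib Require Import List.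

Definition exit_loc (c : stmt) (sp : stmt_path) : location := fst (next_loc c sp).

Lemma root_in_all_locations (c : stmt) (sp : stmt_path) :
  In (Loc c sp) (all_locations c sp).
Proof. destruct c; left; reflexivity. Qed.

Lemma synt_step_image_root (c : stmt) (sp : stmt_path) (b : bool) (cfg : synt_config) :
  In cfg (synt_step_image (Loc c sp, b)) ->
  In (fst cfg) (exit_loc c sp :: all_locations c sp).
Proof.
  intros Hcfg; destruct b.
  - right; destruct c; simpl in Hcfg |- *;
      repeat destruct Hcfg as [<- | Hcfg]; try contradiction; simpl;
      rewrite ?in_app_iff; auto using root_in_all_locations.
  - left; destruct sp; simpl in Hcfg; try contradiction;
      destruct Hcfg as [<- | []]; reflexivity.
Qed.

Lemma synt_step_image_within (c : stmt) : forall sp lc b (cfg : synt_config),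
  In lc (all_locations c sp) ->
  In cfg (synt_step_image (lc, b)) ->
  In (fst cfg) (exit_loc c sp :: all_locations c sp).
Proof.
  induction c as [| | c1 IH1 c2 IH2 | e c1 IH1 c2 IH2 | e c' IH];
    intros sp lc b cfg Hlc Hcfg;
    destruct Hlc as [<- | Hlc]; try (now apply synt_step_image_root with b);
    simpl in Hlc; try contradiction; right; simpl; rewrite ?in_app_iff.
  - apply in_app_or in Hlc as [Hlc | Hlc].
    + destruct (IH1 _ _ _ _ Hlc Hcfg) as [<- | Hin]; auto.
      do 2 right; apply root_in_all_locations.
    + destruct (IH2 _ _ _ _ Hlc Hcfg) as [<- | Hin]; auto.
  - apply in_app_or in Hlc as [Hlc | Hlc].
    + destruct (IH1 _ _ _ _ Hlc Hcfg) as [<- | Hin]; auto.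
    + destruct (IH2 _ _ _ _ Hlc Hcfg) as [<- | Hin]; auto.
  - destruct (IH _ _ _ _ Hlc Hcfg) as [<- | Hin]; auto.
Qed.

Theorem lemma2 (c : stmt) (lc : location) (b : bool) :
  In lc (all_locations c PTop) ->
  forall cfg, In cfg (synt_step_image (lc, b)) ->
  In (fst cfg) (all_locations c PTop).
Proof.
  intros Hlc cfg Hcfg.
  destruct (synt_step_image_within c PTop lc b cfg Hlc Hcfg) as [Hexit | Hin].
  - rewrite <- Hexit; apply root_in_all_locations.
  - exact Hin.
Qed.
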